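(* Let $k$ be an odd positive integer, let $A,B$ be finite subsets of an abelian group, and let $C\subseteq A+B$. Let $\Gamma_C$ be the bipartite graph with vertex classes $A$ and $B$ (taken as disjoint copies) in which $a\in A$ and $b\in B$ are adjacent if and only if $a+b\in C$. Suppose that for every pair $(a,b)\in A\times B$ there are at least $w>0$ walks of length $k$ in $\Gamma_C$ from $a$ to $b$. Then $|A+B|\le |C|^k/w$.
   Context: For subsets $X,Y$ of an abelian group, $X+Y=\{x+y:x\in X,y\in Y\}$. A walk of length $k$ is a sequence of $k+1$ vertices with consecutive vertices adjacent. *)

From HB Require Import structures.
From mathcomp Require Import all_boot all_order all_algebra.
From mathcomp Require Import finmap.
Set Implicit Arguments. Unset Strict Implicit. Unset Printing Implicit Defensive.
Import Order.TTheory GRing.Theory Num.Theory.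
Local Open Scope fset_scope.
Local Open Scope ring_scope.

Definition sumset (G : zmodType) (X Y : {fset G}) : {fset G} :=
  [fset (x + y) | x in X, y in Y].

Definition bvert (G : zmodType) (A B : {fset G}) : finType := (A + B)%type.

Definition gammaC_adj (G : zmodType) (A B C : {fset G})
  (u v : bvert A B) : bool :=
  match u, v with
  | inl a, inr b => (val a + val b) \in C
  | inr b, inl a => (val a + val b) \in C
  | _, _ => false
  end.

Definition nwalks (G : zmodType) (A B C : {fset G}) (k : nat)
  (u v : bvert A B) : nat :=
  #|[set t : k.+1.-tuple (bvert A B) |
      [&& tnth t ord0 == u, tnth t ord_max == v &
          [forall i : 'I_k,
             gammaC_adj C (tnth t (widen_ord (leqnSn k) i))
                          (tnth t (lift ord0 i))]]]|%N.

From HB Require Import structures.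
From mathcomp Require Import all_boot all_order all_algebra.
From mathcomp Require Import finmap.
Set Implicit Arguments. Unset Strict Implicit. Unset Printing Implicit Defensive.
Import Order.TTheory GRing.Theory Num.Theory.
Local Open Scope fset_scope.
Local Open Scope ring_scope.

(* Fix a representation s = a_s + b_s of every s in A + B and send a walk
   from a_s to b_s to its sequence of edge labels c_i = x_i + x_(i+1) in C^k.
   This is injective: since k is odd, the alternating sum of the labels is
   x_0 + x_k = s, and from the start a_s and the labels the walk is rebuilt
   vertex by vertex.  Hence w |A + B| <= sum_s (number of walks) <= |C|^k. *)

Lemma eq_endpoint_sums_odd (G : zmodType) (x y : nat -> G) (k : nat) :
  (forall i, (i < k)%N -> x i + x i.+1 = y i + y i.+1) -> odd k ->
  x 0%N + x k = y 0%N + y k.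
Proof.
move=> eq_steps odd_k.
have diff_alt j : (j <= k)%N ->
    x j - y j = if odd j then y 0%N - x 0%N else x 0%N - y 0%N.
  elim: j => [//|j IH] le_jk.
  have -> : x j.+1 - y j.+1 = - (x j - y j).
    rewrite opprB -(addKr (x j) (x j.+1)) (eq_steps j le_jk).
    by rewrite addrA addrK addrC.
  by rewrite IH ?(ltnW le_jk) //=; case: (odd j); rewrite /= opprB.
have := diff_alt k (leqnn k); rewrite odd_k => /eqP.
by rewrite subr_eq => /eqP ->; rewrite addrA [x 0%N + _]addrC subrK.
Qed.

Section Walks.

Variables (G : zmodType) (A B C : {fset G}) (k : nat).

Local Notation vertex := (bvert A B).

Definition vval (u : vertex) : G :=
  match u with inl a => val a | inr b => val b end.

Lemma adj_vval_sum (u v : vertex) : gammaC_adj C u v -> vval u + vval v \in C.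
Proof. by case: u => a; case: v => b //=; rewrite addrC. Qed.

Lemma adj_vval_inj (u v v' : vertex) :
  gammaC_adj C u v -> gammaC_adj C u v' -> vval v = vval v' -> v = v'.
Proof.
by case: u => a; case: v => b //; case: v' => b' //= _ _ /val_inj ->.
Qed.

Definition is_walk (t : k.+1.-tuple vertex) : bool :=
  [forall i : 'I_k, gammaC_adj C (tnth t (widen_ord (leqnSn k) i))
                                 (tnth t (lift ord0 i))].

Definition walks (u v : vertex) : {set k.+1.-tuple vertex} :=
  [set t | [&& tnth t ord0 == u, tnth t ord_max == v & is_walk t]].

Lemma card_walks u v : #|walks u v| = nwalks C k u v.
Proof. by []. Qed.

Definition vtx (t : k.+1.-tuple vertex) (j : nat) : vertex := tnth t (inord j).

Definition step_label (t : k.+1.-tuple vertex) (j : nat) : G :=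
  vval (vtx t j) + vval (vtx t j.+1).

Lemma vtx0 t : vtx t 0 = tnth t ord0.
Proof. by rewrite /vtx; congr tnth; apply: val_inj; rewrite /= inordK. Qed.

Lemma vtx_last t : vtx t k = tnth t ord_max.
Proof. by rewrite /vtx; congr tnth; apply: val_inj; rewrite /= inordK. Qed.

Lemma is_walk_adj t j :
  is_walk t -> (j < k)%N -> gammaC_adj C (vtx t j) (vtx t j.+1).
Proof.
move=> /forallP walk_t lt_jk; have := walk_t (Ordinal lt_jk).
by rewrite /vtx; congr (gammaC_adj C (tnth t _) (tnth t _));
  apply: val_inj; rewrite /= inordK // ltnS ltnW.
Qed.

Lemma step_label_in t j : is_walk t -> (j < k)%N -> step_label t j \in C.
Proof. by move=> walk_t lt_jk; apply/adj_vval_sum/is_walk_adj. Qed.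

Lemma walk_eq_of_step_labels t t' :
  is_walk t -> is_walk t' -> tnth t ord0 = tnth t' ord0 ->
  (forall j, (j < k)%N -> step_label t j = step_label t' j) -> t = t'.
Proof.
move=> walk_t walk_t' eq_start eq_labels.
have eq_vtx j : (j <= k)%N -> vtx t j = vtx t' j.
  elim: j => [|j IH] le_jk; first by rewrite !vtx0.
  have eq_prev := IH (ltnW le_jk).
  apply: (adj_vval_inj (is_walk_adj walk_t le_jk)).
    by rewrite eq_prev; apply: is_walk_adj.
  by apply: (addrI (vval (vtx t j))); rewrite [X in X = _]eq_labels // eq_prev.
by apply: eq_from_tnth => i; rewrite -(inord_val i); apply: eq_vtx; rewrite -ltnS.
Qed.

Lemma walk_endpoint_sum t t' :
  odd k -> (forall j, (j < k)%N -> step_label t j = step_label t' j) ->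
  vval (tnth t ord0) + vval (tnth t ord_max) =
  vval (tnth t' ord0) + vval (tnth t' ord_max).
Proof.
by move=> odd_k eq_labels; rewrite -!vtx0 -!vtx_last;
  apply: (eq_endpoint_sums_odd (x := vval \o vtx t) (y := vval \o vtx t')).
Qed.

Lemma sum_card_walks_le (I : finType) (a : I -> A) (b : I -> B) :
  odd k -> injective (fun i => val (a i) + val (b i)) ->
  (\sum_i #|walks (inl (a i)) (inr (b i))| <= #|` C| ^ k)%N.
Proof.
move=> odd_k inj_ab.
pose W i := walks (inl (a i)) (inr (b i)).
pose P := [set p : I * k.+1.-tuple vertex | p.2 \in W p.1].
have -> : (\sum_i #|W i| = #|P|)%N.
  rewrite -sum1_card (eq_bigr (fun i => (\sum_(t in W i) 1)%N)) => [|i _].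
    by rewrite pair_big_dep; apply: eq_bigl => p; rewrite /P inE.
  by rewrite sum1_card.
have [-> | [p0 P_p0]] := set_0Vmem P; first by rewrite cards0.
have walk_of p : p \in P -> is_walk p.2.
  by rewrite !inE => /and3P[].
have k_gt0 : (0 < k)%N by case: k odd_k.
(* Any label in C serves as the default value of [insubd]: on P it is never used. *)
pose c0 : C := [` step_label_in (walk_of p0 P_p0) k_gt0].
pose labels (p : I * k.+1.-tuple vertex) : {ffun 'I_k -> C} :=
  [ffun i : 'I_k => insubd c0 (step_label p.2 i)].
have labelsE p (i : 'I_k) : p \in P -> val (labels p i) = step_label p.2 i.
  by move=> P_p; rewrite ffunE insubdK //; apply: step_label_in (walk_of p P_p) _.
have : {in P &, injective labels}.
  move=> [s t] [s' t'] P_st P_st' eq_labels.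
  have eq_steps j : (j < k)%N -> step_label t j = step_label t' j.
    move=> lt_jk; rewrite -(labelsE _ (Ordinal lt_jk) P_st).
    by rewrite -(labelsE _ (Ordinal lt_jk) P_st') eq_labels.
  move: P_st P_st'; rewrite !inE /= => /and3P[/eqP t0 /eqP tk walk_t].
  move=> /and3P[/eqP t'0 /eqP t'k walk_t'].
  have eq_s : s = s'.
    by apply: inj_ab; have := walk_endpoint_sum odd_k eq_steps;
      rewrite t0 tk t'0 t'k.
  subst s'; congr pair.
  by apply: walk_eq_of_step_labels; rewrite ?t0 ?t'0.
by move/leq_card_in; rewrite card_ffun card_ord cardfE.
Qed.

End Walks.

Lemma sumset_decomp (G : zmodType) (A B : {fset G}) :
  exists ab : sumset A B -> A * B, forall s, val (ab s).1 + val (ab s).2 = val s.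
Proof.
have ex_ab (s : sumset A B) : exists ab : A * B, val ab.1 + val ab.2 == val s.
  have /imfset2P[x x_A [y y_B ->]] := valP s.
  by exists ([` x_A], [` y_B]).
by exists (fun s => xchoose (ex_ab s)) => s; apply/eqP/(xchooseP (ex_ab s)).
Qed.

Theorem lemma2p1 (R : realFieldType) (G : zmodType) (k : nat)
  (A B C : {fset G}) (w : R) :
  (0 < k)%N -> odd k ->
  C `<=` sumset A B ->
  0 < w ->
  (forall (a : A) (b : B), w <= (nwalks C k (inl a) (inr b))%:R) ->
  (#|` sumset A B|%:R : R) <= (#|` C|%:R) ^+ k / w.
Proof.
move=> _ odd_k _ w_gt0 w_le_walks.
have [ab abE] := sumset_decomp A B.
have inj_ab : injective (fun s => val (ab s).1 + val (ab s).2).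
  by move=> s s'; rewrite !abE => /val_inj.
have := sum_card_walks_le C odd_k inj_ab; rewrite -(ler_nat R) natr_sum natrX.
rewrite ler_pdivlMr //; apply: le_trans.
rewrite mulr_natl cardfE -sumr_const.
by apply: ler_sum => s _; rewrite card_walks; apply: w_le_walks.
Qed.
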